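(* Let $N\in\mathbb Z$, $\gamma\in\mathbb Q$. For every $k\in\mathbb Q$ and every integer $i\le N$, $$\varphi_{N,\gamma}\Big(\mathrm{Res}_x\big((1+x)^kx^i\textstyle\sum_{j\le N}z^jx^{-j-1}\big)\Big)=(-1)^{i+1}\mathrm{Res}_x\big((1+x)^{\gamma-k-i}x^i\textstyle\sum_{j\le N}z^jx^{-j-1}\big).$$ In particular $\varphi_{N,\gamma}^2=\mathrm{id}$, and $\varphi_{N,\gamma}(O(N,Q,q;z))=O(N,\gamma-Q-q,q;z)$ for all $Q\in\mathbb Q$, $q\in\mathbb Z$.
   Context: $\mathrm{Res}_x$ denotes the coefficient of $x^{-1}$ and $(1+x)^c$ ($c\in\mathbb Q$) denotes the binomial series $\sum_{k\ge0}\binom ckx^k$; thus $\mathrm{Res}_x\big((1+x)^kx^i\sum_{j\le N}z^jx^{-j-1}\big)=\sum_{l=0}^{N-i}\binom kl z^{i+l}$. The linear map $\varphi_{N,\gamma}:\mathbb C[z,z^{-1}]\to\mathbb C[z,z^{-1}]$ is defined on monomials by $\varphi_{N,\gamma}(z^i)=(-1)^{i+1}\mathrm{Res}_x\big((1+x)^{\gamma-i}x^i\sum_{j\le N}z^jx^{-j-1}\big)$ for $i\le N$ and $\varphi_{N,\gamma}(z^i)=z^i$ for $i\ge N+1$. For $N,q\in\mathbb Z$ and $Q\in\mathbb Q$, $O(N,Q,q;z)$ is the subspace of $\mathbb C[z,z^{-1}]$ spanned by $z^i$ ($i\ge N+1$) together with $\sum_{i=0}^{N-q-j}\binom Qi z^{i+q+j}$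 for $j=0,-1,-2,\dots$. *)

From HB Require Import structures.
From mathcomp Require Import all_boot all_order all_algebra.
Set Implicit Arguments. Unset Strict Implicit. Unset Printing Implicit Defensive.
Import Order.TTheory GRing.Theory Num.Theory.
Local Open Scope ring_scope.

Definition binq (c : rat) (l : nat) : rat :=
  (\prod_(t < l) (c - t%:R)) / (l`!)%:R.

(* Laurent polynomials in z over R, given as finite formal sums
   sum_{(i,c) in s} c z^i.  Two formal sums denote the same Laurent
   polynomial iff their coefficient functions [lcoef] agree. *)
Definition lpoly (R : nzRingType) := seq (int * R).

Definition lcoef (R : nzRingType) (s : lpoly R) (m : int) : R :=
  \sum_(t <- s | t.1 == m) t.2.

Definition lmono (R : nzRingType) (i : int) : lpoly R := [:: (i, 1)].

Definition lscale (R : nzRingType) (c : R) (s : lpoly R) : lpoly R :=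
  [seq (t.1, c * t.2) | t <- s].

(* ressum c a M = sum_{l=0}^{M-a} binom(c,l) z^{a+l}  (empty if M < a).
   In particular Res_x((1+x)^k x^i sum_{j<=N} z^j x^{-j-1}) = ressum k i N. *)
Definition ressum (R : numFieldType) (c : rat) (a M : int) : lpoly R :=
  [seq (a + (l%:Z), ratr (binq c l)) |
     l <- iota 0 (if a <= M then (absz (M - a)).+1 else 0)].

Definition phi_mono (R : numFieldType) (N : int) (g : rat) (i : int) : lpoly R :=
  if i <= N then lscale ((-1) ^ (i + 1)) (ressum R (g - i%:~R) i N)
  else lmono R i.

Definition phi (R : numFieldType) (N : int) (g : rat) (s : lpoly R) : lpoly R :=
  flatten [seq lscale t.2 (phi_mono R N g t.1) | t <- s].

(* s lies in O(N,Q,q;z): s is (as a Laurent polynomial) a finite linear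
   combination of z^i (i >= N+1) and of sum_{i=0}^{N-q-j} binom(Q,i) z^{i+q+j}
   (j <= 0). *)
Definition inO (R : numFieldType) (N : int) (Q : rat) (q : int) (s : lpoly R) : Prop :=
  exists (a b : seq (int * R)),
    all (fun t => N < t.1) a /\ all (fun t => t.1 <= 0) b /\
    lcoef s =1 lcoef (a ++ flatten [seq lscale t.2 (ressum R Q (q + t.1) N) | t <- b]).
Arguments ressum R c a M : clear implicits.
Arguments phi_mono R N g i : clear implicits.
Arguments phi R N g s : clear implicits.
Arguments inO R N Q q s : clear implicits.

From HB Require Import structures.
From mathcomp Require Import all_boot all_order all_algebra.
From mathcomp Require Import zify ring.
Set Implicit Arguments.
Unset Strict Implicit.
Unset Printing Implicit Defensive.
Import Order.TTheory GRing.Theory Num.Theory.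
Local Open Scope ring_scope.

(* Write S(c, a) for [ressum R c a N] = sum_{l=0}^{N-a} binom(c,l) z^(a+l), so
   that phi(z^j) = (-1)^(j+1) S(gamma - j, j) for j <= N.  The theorem reduces
   to two identities for binomial coefficients with rational upper argument,
   both consequences of the Chu-Vandermonde convolution:
   - the alternating convolution
       sum_{l<=p} (-1)^l binom(k,l) binom(a-l, p-l) = binom(a-k, p)
     (Vandermonde plus the reflection binom(c,r) = (-1)^r binom(r-c-1, r)),
     which, read coefficientwise, is phi(S(k,i)) = (-1)^(i+1) S(gamma-k-i, i);
   - the expansion S(Q+n, q-n) = sum_{r<=n} binom(n,r) S(Q, q-r) for n : nat.
   Taking k = gamma - j in the first identity gives phi(phi(z^j)) = z^j, so phi
   is an involution.  Formal sums are compared through their coefficients, and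
   the linearity of phi is handled by the pairing [leval f s] of a formal sum
   with a coefficient function, which depends only on the coefficients of s.
   Finally phi maps the spanning vectors z^i (i > N) and S(Q, q-n) of
   O(N,Q,q) into O(N, gamma-Q-q, q) by the expansion identity; the reverse
   inclusion follows by involutivity, as gamma - (gamma-Q-q) - q = Q. *)

Lemma binq0 (c : rat) : binq c 0 = 1.
Proof. by rewrite /binq big_ord0 fact0 divr1. Qed.

Lemma binq_absorb (c : rat) (l : nat) : l.+1%:R * binq c l.+1 = c * binq (c - 1) l.
Proof.
rewrite /binq big_ord_recl /= subr0 factS natrM.
under eq_bigr => t _ do rewrite /bump /= add1n -addn1 natrD opprD addrA addrAC.
have fact_neq0 : (l`!)%:R != 0 :> rat by rewrite pnatr_eq0 -lt0n fact_gt0.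
have succ_neq0 : (l.+1)%:R != 0 :> rat by rewrite pnatr_eq0.
by field; rewrite nat1r fact_neq0 succ_neq0.
Qed.

Lemma binq0n (n : nat) : binq 0 n = (n == 0)%N%:R.
Proof.
case: n => [|n]; first by rewrite binq0.
have := binq_absorb 0 n; rewrite mul0r => /eqP.
by rewrite mulf_eq0 pnatr_eq0 /= => /eqP.
Qed.

Lemma binq_vandermonde (n : nat) (x y : rat) :
  binq (x + y) n = \sum_(l < n.+1) binq x l * binq y (n - l).
Proof.
elim: n x y => [|n IH] x y; first by rewrite big_ord1 !binq0 mulr1.
have succ_neq0 : (n.+1)%:R != 0 :> rat by rewrite pnatr_eq0.
apply: (mulfI succ_neq0); rewrite binq_absorb.
have lower_x : binq (x + y - 1) n = \sum_(l < n.+1) binq (x - 1) l * binq y (n - l).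
  by rewrite -IH; congr binq; ring.
have lower_y : binq (x + y - 1) n = \sum_(l < n.+1) binq x l * binq (y - 1) (n - l).
  by rewrite -IH; congr binq; ring.
rewrite mulrDl {1}lower_x lower_y [RHS]mulr_sumr.
rewrite [RHS](eq_bigr (fun l : 'I_n.+2 => l%:R * (binq x l * binq y (n.+1 - l))
          + (n.+1 - l)%:R * (binq x l * binq y (n.+1 - l)))); last first.
  by move=> l _; rewrite -mulrDl -natrD subnKC // -ltnS ltn_ord.
rewrite big_split /= [X in _ = X + _]big_ord_recl /= mul0r add0r.
rewrite [X in _ = _ + X]big_ord_recr /= subnn mul0r addr0.
rewrite !mulr_sumr; congr (_ + _); apply: eq_bigr => i _.
  by rewrite /bump /= add1n subSS [RHS]mulrA binq_absorb mulrA.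
by rewrite subSn -1?ltnS // [RHS]mulrCA binq_absorb mulrCA.
Qed.

Lemma binq_nat (m l : nat) : binq m%:R l = 'C(m, l)%:R.
Proof.
elim: m l => [|m IH] [|l]; rewrite ?binq0 ?bin0 ?binq0n ?bin0n //.
have succ_neq0 : (l.+1)%:R != 0 :> rat by rewrite pnatr_eq0.
apply: (mulfI succ_neq0); rewrite binq_absorb -natrM -mul_bin_diag natrM /=.
by rewrite -IH -natr1 addrK.
Qed.

Lemma binq_reflect (c : rat) (r : nat) : binq c r = (-1) ^+ r * binq (r%:R - c - 1) r.
Proof.
rewrite /binq mulrA; congr (_ / _).
rewrite [X in _ = _ * X](reindex_inj rev_ord_inj) /=.
rewrite [X in _ = _ * X](eq_bigr (fun t : 'I_r => (-1) * (c - t%:R))); last first.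
  by move=> t _; rewrite natrB ?ltn_ord // -natr1; ring.
by rewrite big_split /= prodr_const card_ord mulrA -exprMn mulrNN mulr1 expr1n mul1r.
Qed.

Lemma binq_alt_conv (k a : rat) (p : nat) :
  \sum_(l < p.+1) (-1) ^+ l * binq k l * binq (a - l%:R) (p - l) = binq (a - k) p.
Proof.
rewrite binq_reflect.
have -> : p%:R - (a - k) - 1 = k + (p%:R - a - 1) by ring.
rewrite binq_vandermonde mulr_sumr; apply: eq_bigr => l _.
have le_lp : (l <= p)%N by rewrite -ltnS.
rewrite (binq_reflect (a - _)) natrB //.
have -> : (-1) ^+ p = (-1) ^+ l * (-1) ^+ (p - l) :> rat by rewrite -exprD subnKC.
have -> : p%:R - l%:R - (a - l%:R) - 1 = p%:R - a - 1 by ring.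
ring.
Qed.

Lemma big_nat_trunc (V : nmodType) (F : nat -> V) (a b : nat) : (a <= b)%N ->
  (forall l, (a <= l < b)%N -> F l = 0) ->
  \sum_(0 <= l < b) F l = \sum_(0 <= l < a) F l.
Proof.
move=> le_ab F0; rewrite (big_cat_nat _ (n := a)) //= [X in _ + X]big_nat_cond.
by rewrite [X in _ + X]big1 ?addr0 // => l /andP [/F0].
Qed.

Section FormalSums.
Variable R : nzRingType.
Implicit Types (s : lpoly R) (m : int) (c : R).

Lemma lcoef_cons (t : int * R) s m :
  lcoef (t :: s) m = (if t.1 == m then t.2 else 0) + lcoef s m.
Proof. by rewrite /lcoef big_cons; case: ifP; rewrite ?add0r. Qed.

Lemma lcoef_cat s1 s2 m : lcoef (s1 ++ s2) m = lcoef s1 m + lcoef s2 m.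
Proof. by rewrite /lcoef big_cat. Qed.

Lemma lcoef_lscale c s m : lcoef (lscale c s) m = c * lcoef s m.
Proof. by rewrite /lcoef /lscale big_map mulr_sumr. Qed.

Lemma lcoef_lmono (i m : int) : lcoef (lmono R i) m = (i == m)%:R.
Proof. by rewrite /lcoef /lmono big_cons big_nil addr0; case: eqP. Qed.

Lemma lcoef_flatten (T : Type) (F : T -> lpoly R) (b : seq T) m :
  lcoef (flatten [seq F t | t <- b]) m = \sum_(t <- b) lcoef (F t) m.
Proof. by rewrite /lcoef big_flatten big_map. Qed.

Definition leval (f : int -> R) s : R := \sum_(t <- s) t.2 * f t.1.

Lemma leval_cat f s1 s2 : leval f (s1 ++ s2) = leval f s1 + leval f s2.
Proof. by rewrite /leval big_cat. Qed.

Lemma leval_lscale f c s : leval f (lscale c s) = c * leval f s.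
Proof.
by rewrite /leval /lscale big_map mulr_sumr; apply: eq_bigr => t _; rewrite mulrA.
Qed.

Lemma leval_flatten (T : Type) f (F : T -> lpoly R) (b : seq T) :
  leval f (flatten [seq F t | t <- b]) = \sum_(t <- b) leval f (F t).
Proof. by rewrite /leval big_flatten big_map. Qed.

Lemma leval_delta s m : leval (fun j => (j == m)%:R) s = lcoef s m.
Proof.
rewrite /leval /lcoef [RHS]big_mkcond /=; apply: eq_bigr => t _.
by case: (t.1 == m); rewrite ?mulr1 ?mulr0.
Qed.

Lemma leval_support f s (r : seq int) :
  uniq r -> {subset [seq t.1 | t <- s] <= r} ->
  leval f s = \sum_(i <- r) lcoef s i * f i.
Proof.
move=> uniq_r; elim: s => [|t s IH] sub_r.
  by rewrite /leval big_nil big1 // => i _; rewrite /lcoef big_nil mul0r.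
have t1_r : t.1 \in r by apply: sub_r; rewrite inE eqxx.
have sub_r' : {subset [seq t.1 | t <- s] <= r}.
  by move=> x x_s; apply: sub_r; rewrite inE x_s orbT.
rewrite /leval big_cons -/(leval f s) (IH sub_r').
under [RHS]eq_bigr => i _ do rewrite lcoef_cons mulrDl.
rewrite big_split /=; congr (_ + _).
rewrite (big_rem t.1) //= eqxx big1_seq ?addr0 // => i /andP [_].
rewrite rem_filter // mem_filter /= => /andP [ne_it _].
by rewrite eq_sym (negbTE ne_it) mul0r.
Qed.

Lemma leval_eq f s s' : lcoef s =1 lcoef s' -> leval f s = leval f s'.
Proof.
move=> eq_coef; set r := undup [seq t.1 | t <- s ++ s'].
have uniq_r : uniq r := undup_uniq _.
rewrite (@leval_support f s r) //; last first.
  by move=> x x_s; rewrite mem_undup map_cat mem_cat x_s.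
rewrite (@leval_support f s' r) //; last first.
  by move=> x x_s'; rewrite mem_undup map_cat mem_cat x_s' orbT.
by apply: eq_bigr => i _; rewrite eq_coef.
Qed.

End FormalSums.

Section Phi.
Variables (R : numFieldType) (N : int) (g : rat).
Implicit Types (s : lpoly R) (i j m : int).

Lemma lcoef_ressum (c : rat) (a M p : int) :
  lcoef (ressum R c a M) p =
  if (a <= p) && (p <= M) then ratr (binq c (absz (p - a))) else 0.
Proof.
rewrite /lcoef /ressum big_map /=.
have [in_range|out_range] := boolP ((a <= p) && (p <= M)); last first.
  rewrite big1_seq // => l /andP [/eqP hit]; case: ifP => le_aM; rewrite mem_iota //.
  by move=> /andP [_ lt_l]; move: hit lt_l out_range le_aM; lia.
have le_aM : a <= M by lia.
rewrite le_aM (big_rem (absz (p - a))); last by rewrite mem_iota; lia.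
have -> : (a + (absz (p - a))%:Z == p) = true by apply/eqP; lia.
rewrite big1_seq; first by rewrite /= addr0.
move=> l /andP [/eqP hit].
rewrite rem_filter ?iota_uniq // mem_filter /= => /andP [/eqP ne_l _].
by exfalso; apply: ne_l; lia.
Qed.

Lemma lcoef_phi s m :
  lcoef (phi R N g s) m = leval (fun j => lcoef (phi_mono R N g j) m) s.
Proof.
by rewrite /phi lcoef_flatten /leval; apply: eq_bigr => t _; rewrite lcoef_lscale.
Qed.

Lemma lcoef_phi_mono j m : j <= N ->
  lcoef (phi_mono R N g j) m = (-1) ^ (j + 1) *
    if (j <= m) && (m <= N) then ratr (binq (g - j%:~R) (absz (m - j)%R)) else 0.
Proof. by move=> le_jN; rewrite /phi_mono le_jN lcoef_lscale lcoef_ressum. Qed.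

Lemma phi_ressum (k : rat) i m :
  lcoef (phi R N g (ressum R k i N)) m
  = (-1) ^ (i + 1) * lcoef (ressum R (g - k - i%:~R) i N) m.
Proof.
case: (boolP (i <= N)) => [le_iN|gt_iN]; last first.
  by rewrite /ressum (negbTE gt_iN) /= /phi /lcoef /= !big_nil mulr0.
rewrite lcoef_ressum lcoef_phi /leval /ressum le_iN big_map.
set K := (absz (N - i)).+1.
rewrite -(subn0 K) -/(index_iota 0 K).
have [in_range|out_range] := boolP ((i <= m) && (m <= N)); last first.
  rewrite mulr0 big_nat big1 // => l lt_lK.
  by rewrite /= lcoef_phi_mono ?ifF ?mulr0 //; [apply/negbTE|]; move: lt_lK; lia.
set p := absz (m - i).
rewrite (@big_nat_trunc _ _ p.+1) => [||l /andP [lt_pl lt_lK]]; last first.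
- rewrite /= lcoef_phi_mono ?ifF ?mulr0 //; [apply/negbTE|];
    by move: lt_pl lt_lK; rewrite /p /K; lia.
- by rewrite /K /p; lia.
have -> : g - k - i%:~R = g - i%:~R - k by ring.
rewrite big_mkord -binq_alt_conv rmorph_sum mulr_sumr; apply: eq_bigr => l _.
have le_lp : (l <= p)%N by rewrite -ltnS.
have le_ilN : i + (l : nat)%:Z <= N by move: le_lp in_range; rewrite /p; lia.
have in_range_l : (i + (l : nat)%:Z <= m) && (m <= N) by move: le_lp; rewrite /p; lia.
rewrite /= lcoef_phi_mono // in_range_l.
have -> : absz (m - (i + (l : nat)%:Z))%R = (p - l)%N by move: le_lp; rewrite /p; lia.
have -> : g - (i + (l : nat)%:Z)%:~R = g - i%:~R - (l : nat)%:R.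
  by rewrite intrD [X in _ - (_ + X)]/intmul /=; ring.
have -> : (-1 : R) ^ (i + (l : nat)%:Z + 1) = (-1) ^ (i + 1) * (-1) ^+ l.
  by rewrite addrAC expfzDr // oppr_eq0 oner_eq0.
by rewrite !rmorphM rmorph_sign; ring.
Qed.

(* phi(phi(z^j)) = z^j: for j <= N this is [phi_ressum] with k = gamma - j. *)
Lemma phi_phi_mono j m : lcoef (phi R N g (phi_mono R N g j)) m = (j == m)%:R.
Proof.
rewrite /phi_mono; case: ifP => le_jN; last first.
  by rewrite lcoef_phi /leval big_cons big_nil addr0 /= mul1r /phi_mono le_jN lcoef_lmono.
rewrite lcoef_phi leval_lscale -lcoef_phi phi_ressum mulrA -expfzMl mulrNN mulr1.
rewrite exp1rz mul1r lcoef_ressum (_ : g - (g - j%:~R) - j%:~R = 0); last by ring.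
have [in_range|out_range] := boolP ((j <= m) && (m <= N)); last first.
  by have -> : (j == m) = false by apply/negbTE; move: out_range le_jN; lia.
rewrite binq0n; have [<-|ne_jm] := eqVneq j m; first by rewrite subrr rmorph1.
by rewrite (_ : (_ == 0)%N = false) ?rmorph0 //; apply/negbTE; move: ne_jm in_range; lia.
Qed.

Lemma phi_involutive s : lcoef (phi R N g (phi R N g s)) =1 lcoef s.
Proof.
move=> m; rewrite lcoef_phi {1}/phi leval_flatten -leval_delta [RHS]/leval.
by apply: eq_bigr => t _; rewrite leval_lscale -lcoef_phi phi_phi_mono.
Qed.

Lemma ressum_expand (Q : rat) (n : nat) (q p : int) :
  lcoef (ressum R (Q + n%:R) (q - n%:Z) N) p =
  \sum_(r <- iota 0 n.+1) ratr (binq n%:R r) * lcoef (ressum R Q (q - r%:Z) N) p.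
Proof.
rewrite lcoef_ressum; under eq_bigr => r _ do rewrite lcoef_ressum.
have [in_range|out_range] := boolP ((q - n%:Z <= p) && (p <= N)); last first.
  rewrite big1_seq // => r; rewrite mem_iota => /andP [_ lt_rn].
  by rewrite ifF ?mulr0 //; apply/negbTE; move: out_range lt_rn; lia.
set d := absz (p - (q - n%:Z))%R.
pose G l := 'C(n, l)%:R * (if (l <= d)%N then ratr (binq Q (d - l)) : R else 0).
rewrite -(subn0 n.+1) -/(index_iota 0 n.+1) big_nat_rev /=.
rewrite (eq_big_nat _ _ (F2 := G)) => [|r /andP [_ lt_rn]]; last first.
  rewrite add0n subSS binq_nat bin_sub // /G; have [le_rd|lt_dr] := leqP r d.
    rewrite ifT; last by move: in_range lt_rn le_rd; rewrite /d; lia.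
    by rewrite ratr_nat; congr (_ * ratr (binq _ _)); move: in_range lt_rn le_rd; rewrite /d; lia.
  rewrite mulr0 ifF ?mulr0 //; apply/negbTE; move: in_range lt_rn lt_dr; rewrite /d; lia.
rewrite addrC binq_vandermonde rmorph_sum.
transitivity (\sum_(0 <= l < d.+1) G l); last first.
  rewrite -(@big_nat_trunc _ G _ (d.+1 + n.+1)) ?leq_addr //; last first.
    by move=> l /andP [lt_dl _]; rewrite /G ifF ?mulr0 //; apply/negbTE; lia.
  rewrite -(@big_nat_trunc _ G n.+1 (d.+1 + n.+1)) ?leq_addl //.
  by move=> l /andP [lt_nl _]; rewrite /G bin_small ?mul0r.
rewrite big_mkord; apply: eq_bigr => l _.
by rewrite /G -ltnS ltn_ord rmorphM binq_nat rmorph_nat.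
Qed.

Lemma phi_inO (Q : rat) (q : int) s :
  inO R N Q q s -> inO R N (g - Q - q%:~R) q (phi R N g s).
Proof.
move=> [a [b [a_high [b_nonpos eq_coef]]]].
exists a, (flatten [seq [seq (- (r%:Z), t.2 * (-1) ^ (q + t.1 + 1)
                                        * ratr (binq (absz t.1)%:R r))
                     | r <- iota 0 (absz t.1).+1] | t <- b]).
split=> //; split.
  by apply/allP => t /flattenP [_ /mapP [u _ ->] /mapP [r _ ->]] /=; lia.
move=> m; rewrite lcoef_phi (leval_eq _ eq_coef) leval_cat leval_flatten.
rewrite lcoef_cat lcoef_flatten big_flatten big_map; congr (_ + _).
  rewrite -[RHS]leval_delta /leval !big_seq; apply: eq_bigr => t /(allP a_high) /= gt_tN.
  by rewrite /phi_mono ifF ?lcoef_lmono //; apply/negbTE; lia.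
rewrite !big_seq; apply: eq_bigr => t /(allP b_nonpos) le_t0.
have t1E : t.1 = - (absz t.1)%:Z by rewrite lez0_abs ?opprK.
rewrite leval_lscale -lcoef_phi phi_ressum big_map.
move: (absz t.1) t1E => n ->.
have -> : g - Q - (q - n%:Z)%:~R = g - Q - q%:~R + n%:R by rewrite intrD mulrNz; ring.
rewrite ressum_expand !mulr_sumr; apply: eq_bigr => r _.
by rewrite lcoef_lscale /=; ring.
Qed.

End Phi.

Theorem mainTheorem6 (R : numClosedFieldType) (N : int) (g : rat) :
  (forall (k : rat) (i : int), i <= N ->
     lcoef (phi R N g (ressum R k i N))
       =1 lcoef (lscale ((-1) ^ (i + 1)) (ressum R (g - k - i%:~R) i N)))
  /\ (forall s : lpoly R, lcoef (phi R N g (phi R N g s)) =1 lcoef s)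
  /\ (forall (Q : rat) (q : int),
        (forall s : lpoly R, inO R N Q q s -> inO R N (g - Q - q%:~R) q (phi R N g s))
        /\ (forall t : lpoly R, inO R N (g - Q - q%:~R) q t ->
              exists s : lpoly R, inO R N Q q s /\ lcoef (phi R N g s) =1 lcoef t)).
Proof.
split; first by move=> k i _ m; rewrite phi_ressum lcoef_lscale.
split; first exact: phi_involutive.
move=> Q q; split; first exact: phi_inO.
move=> t t_inO; exists (phi R N g t); split; last exact: phi_involutive.
have -> : Q = g - (g - Q - q%:~R) - q%:~R by ring.
exact: phi_inO.
Qed.
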